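(* Let $p$ be a prime and $G_p^{rf}=\mathbb{Z}_{p^{r_1}}\oplus\mathbb{Z}_{p^{r_2}}\oplus\cdots\oplus\mathbb{Z}_{p^{r_k}}$ with $1\le r_1<r_2<\cdots<r_k$. Set $n_i=r_{i+1}-r_i$ for $1\le i\le k-1$. Then the number of orbits of the automorphism group $\mathrm{Aut}(G_p^{rf})$ acting on the elements of $G_p^{rf}$ is $$(r_1+1)(n_1+1)(n_2+1)\cdots(n_{k-1}+1).$$ *)

From HB Require Import structures.
From mathcomp Require Import all_boot all_order all_algebra all_fingroup all_solvable.
Set Implicit Arguments. Unset Strict Implicit. Unset Printing Implicit Defensive.
Import GRing.Theory.

(* The abelian p-group  Z_{p^{r_0}} (+) ... (+) Z_{p^{r_{k-1}}}  as a
   finGroupType: dependent finite functions i : 'I_k -> 'Z_(p ^ r i),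
   with componentwise addition as the group law. *)
Section PrimaryAbelian.
Variables (p k : nat) (r : nat -> nat).

Definition prim_ab := {dffun forall i : 'I_k, 'Z_(p ^ r i)}.
HB.instance Definition _ := Finite.on prim_ab.

Definition prim_ab_mul (x y : prim_ab) : prim_ab :=
  [ffun i => (x i + y i)%R].
Definition prim_ab_one : prim_ab := [ffun i => 0%R].
Definition prim_ab_inv (x : prim_ab) : prim_ab := [ffun i => (- x i)%R].

Lemma prim_ab_mulA : associative prim_ab_mul.
Proof. by move=> x y z; apply/ffunP=> i; rewrite !ffunE addrA. Qed.
Lemma prim_ab_mul1 : left_id prim_ab_one prim_ab_mul.
Proof. by move=> x; apply/ffunP=> i; rewrite !ffunE add0r. Qed.
Lemma prim_ab_mulV : left_inverse prim_ab_one prim_ab_inv prim_ab_mul.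
Proof. by move=> x; apply/ffunP=> i; rewrite !ffunE addNr. Qed.

HB.instance Definition _ := Finite_isGroup.Build prim_ab
  prim_ab_mulA prim_ab_mul1 prim_ab_mulV.
End PrimaryAbelian.

(* For v : nat -> nat with v s <= r s ("bounded"), let canon v be the element
   whose s-th coordinate is p ^ v s.  Call v admissible when
   v j <= v s + (r j - r s) for all j, s, i.e. v is nondecreasing and its
   increments are at most those of r.  The proof has three parts.
   1. Normal form: multiplying each coordinate by a unit is an automorphism,
      so every x lies in the orbit of some canon v.  If v is not admissible,
      a shear automorphism x_j += p^(r j - r s) x_s followed by a rescaling
      lowers v j to v s + (r j - r s); descent on the sum of v ends at an
      admissible v.
   2. Invariants: in any group the property "x = y^m z with z^n = 1" is
      preserved by automorphisms; in G, with m = p^a and n = p^b, it says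
      that p^(min a (r s - b)) divides every coordinate x_s.  For admissible
      v this detects c <= v j, so canon is injective on admissible v up to
      the action.
   3. Counting: admissible bounded v are exactly the partial sums of
      increment sequences d_0 <= r_0, d_i <= r_i - r_{i-1}, hence the orbits
      are counted by the product of the ranges of the increments. *)

From HB Require Import structures.
From mathcomp Require Import all_boot all_order all_algebra all_fingroup all_solvable.
From mathcomp Require Import zify.
Set Implicit Arguments. Unset Strict Implicit. Unset Printing Implicit Defensive.
Import GRing.Theory.

Definition ord_ext n (f : 'I_n -> nat) (i : nat) : nat := odflt 0 (omap f (insub i)).

Lemma ord_extE n (f : 'I_n -> nat) (o : 'I_n) : ord_ext f o = f o.
Proof. by rewrite /ord_ext valK. Qed.

Section ZpArith.
Variable N : nat.
Hypothesis N_gt1 : 1 < N.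

Lemma Zp_valE (x : 'Z_N) : x = ((val x)%:R)%R.
Proof. by rewrite natr_Zp. Qed.

Lemma Zp_val_nat n : val (n%:R : 'Z_N)%R = n %% N.
Proof. exact: val_Zp_nat. Qed.

Lemma Zp_nat_eq0 m : (((m%:R : 'Z_N) == 0)%R) = (N %| m).
Proof. by rewrite -val_eqE /= val_Zp_nat. Qed.

Lemma Zp_mulrn (x : 'Z_N) n : (x *+ n = (val x * n)%:R)%R.
Proof. by rewrite {1}(Zp_valE x) -mulrnA. Qed.

Lemma Zp_nat_modd M n : N %| M -> (((n %% M)%:R : 'Z_N) = n%:R)%R.
Proof. by move=> NM; apply: val_inj; rewrite /= !val_Zp_nat // (modn_dvdm _ NM). Qed.

Lemma Zp_val_lt (x : 'Z_N) : val x < N.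
Proof.
have -> : val x = val x %% N by rewrite -val_Zp_nat // -Zp_valE.
by rewrite ltn_pmod // ltnW.
Qed.

End ZpArith.

Section AutOrbits.
Variable gT : finGroupType.
Local Notation AutT := (Aut [set: gT]).
Local Notation orbAut := (orbit [Aut [set: gT]]%act AutT).

Lemma aut_actE a x : [Aut [set: gT]]%act x a = a x.
Proof. by rewrite -(actpermE [Aut [set: gT]]) autactK. Qed.

Lemma orbit_Aut_morph (f : gT -> gT) :
  (forall x y, f (x * y)%g = (f x * f y)%g) -> injective f ->
  forall x, f x \in orbAut x.
Proof.
move=> fM finj x.
have Af : perm finj \in AutT.
  rewrite inE; apply/andP; split; first by apply/subsetP => ? _; rewrite inE.
  by apply/morphicP => y z _ _; rewrite !permE fM.
by rewrite -(permE finj) -aut_actE mem_orbit.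
Qed.

Lemma orbit_AutP x y : y \in orbAut x -> exists2 a, a \in AutT & y = a x.
Proof. by case/orbitP => a Aa <-; exists a; rewrite ?aut_actE. Qed.

Lemma orbit_Aut_trans x y z : y \in orbAut x -> z \in orbAut y -> z \in orbAut x.
Proof. by move=> xy yz; move: yz xy; apply: orbit_in_trans. Qed.

Definition pow_mul_torsion (x : gT) m n : Prop :=
  exists y z : gT, x = (y ^+ m * z)%g /\ (z ^+ n)%g = 1%g.

Lemma Aut_pow_mul_torsion a x m n :
  a \in AutT -> pow_mul_torsion x m n -> pow_mul_torsion (a x) m n.
Proof.
move=> Aa [y [z [-> zn]]]; exists (a y), (a z).
rewrite -(autmE Aa) morphM ?inE // -!morphX ?inE // zn morph1 //.
Qed.

End AutOrbits.

Section PrimaryAbelian.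
Variables (p k : nat) (r : nat -> nat).
Hypothesis p_prime : prime p.
Hypothesis r0_gt0 : 1 <= r 0.
Hypothesis r_incr : forall i, i.+1 < k -> r i < r i.+1.
Local Notation G := (prim_ab p k r).
Local Notation AutG := (Aut [set: G]).
Local Notation orbG := (orbit [Aut [set: G]]%act AutG).

Lemma p_gt1 : 1 < p. Proof. exact: prime_gt1. Qed.

Lemma r_mono s j : s <= j -> j < k -> r s <= r j.
Proof.
elim: j => [|j IH]; first by rewrite leqn0 => /eqP ->.
rewrite leq_eqVlt => /orP [/eqP -> // | sj] jk.
exact: leq_trans (IH sj (ltnW jk)) (ltnW (r_incr jk)).
Qed.

Lemma r_gt0 (s : 'I_k) : 0 < r s.
Proof. exact: leq_trans r0_gt0 (r_mono (leq0n s) (ltn_ord s)). Qed.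

Lemma modulus_gt1 (s : 'I_k) : 1 < p ^ r s.
Proof. by rewrite -(expn0 p) ltn_exp2l ?p_gt1 ?r_gt0. Qed.

Lemma prim_ab_mulE (x y : G) : (x * y)%g = [ffun i => (x i + y i)%R].
Proof. by []. Qed.

Lemma prim_ab_expE (x : G) n : (x ^+ n)%g = [ffun i => (x i *+ n)%R].
Proof.
elim: n => [|n IH]; apply/ffunP => i; first by rewrite expg0 !ffunE.
by rewrite expgS prim_ab_mulE IH !ffunE mulrS.
Qed.

Definition coord_dvd (x : G) a b :=
  forall s : 'I_k, p ^ minn a (r s - b) %| val (x s).

(* Z_(p^r) has p^a-th powers p^a Z and p^b-torsion p^(r-b) Z, hence: *)
Lemma pow_mul_torsionE x a b :
  pow_mul_torsion x (p ^ a) (p ^ b) <-> coord_dvd x a b.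
Proof.
split=> [[y [z [-> zb]]] s | xdvd].
  rewrite prim_ab_mulE prim_ab_expE !ffunE.
  have zs : p ^ r s %| val (z s) * p ^ b.
    move/ffunP/(_ s): zb; rewrite prim_ab_expE !ffunE Zp_mulrn.
    by move/eqP; rewrite Zp_nat_eq0 ?modulus_gt1.
  have min_le : minn a (r s - b) <= r s by rewrite geq_min leq_subr orbT.
  rewrite Zp_mulrn [z s]Zp_valE -natrD.
  rewrite Zp_val_nat ?modulus_gt1 // /dvdn (modn_dvdm _ (dvdn_exp2l p min_le)).
  rewrite -/(dvdn _ _) dvdn_add ?dvdn_mull ?dvdn_exp2l ?geq_minl //.
  apply: dvdn_trans (dvdn_exp2l p (geq_minr _ _)) _.
  have [br | rb] := leqP b (r s); last by rewrite (eqP (ltnW rb : r s - b == 0)).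
  by rewrite -(@dvdn_pmul2r (p ^ b)) ?expn_gt0 ?prime_gt0 // -expnD subnK.
pose high (s : 'I_k) := a <= r s - b.
exists [ffun s => if high s then ((val (x s) %/ p ^ a)%:R : 'Z_(p ^ r s))%R else 0%R].
exists [ffun s => if high s then 0%R else x s]; split; apply/ffunP => s;
  rewrite ?prim_ab_mulE prim_ab_expE !ffunE; have := xdvd s; rewrite /high.
- case: ifP => [small|_ _]; last by rewrite mul0rn add0r.
  by rewrite (minn_idPl small) addr0 -mulrnA => /divnK ->; rewrite -Zp_valE.
- case: ifP => [_ _|/negbT]; first by rewrite mul0rn.
  rewrite -ltnNge => /ltnW/minn_idPr -> dvd_xs.
  rewrite Zp_mulrn; apply/eqP; rewrite Zp_nat_eq0 ?modulus_gt1 //.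
  apply: dvdn_trans (dvdn_mul dvd_xs (dvdnn (p ^ b))).
  by rewrite -expnD dvdn_exp2l //; lia.
Qed.

Definition canon (v : nat -> nat) : G :=
  [ffun s : 'I_k => ((p ^ v s)%:R : 'Z_(p ^ r s))%R].

Definition bounded (v : nat -> nat) := forall s, s < k -> v s <= r s.

Definition admissible (v : nat -> nat) :=
  [forall j : 'I_k, forall s : 'I_k, v j <= v s + (r j - r s)].

Lemma canon_ext (v w : nat -> nat) :
  (forall s, s < k -> v s = w s) -> canon v = canon w.
Proof. by move=> vw; apply/ffunP => s; rewrite !ffunE vw. Qed.

Lemma canon_dvdE (v : nat -> nat) (s : 'I_k) c : v s <= r s -> c <= r s ->
  (p ^ c %| val (canon v s)) = (c <= v s).
Proof.
move=> vs_le c_le; rewrite ffunE Zp_val_nat ?modulus_gt1 //.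
have [vs_lt | vs_ge] := ltnP (v s) (r s).
  by rewrite modn_small ?ltn_exp2l ?p_gt1 // dvdn_Pexp2l ?p_gt1.
have vsE : v s = r s by apply/eqP; rewrite eqn_leq vs_le.
by rewrite vsE modnn dvdn0 c_le.
Qed.

Lemma canon_coord_dvdP (v : nat -> nat) (j : 'I_k) c :
  admissible v -> bounded v -> c <= r j ->
  coord_dvd (canon v) c (r j - c) <-> c <= v j.
Proof.
move=> adm bnd c_le; split=> [/(_ j) | c_vj s].
  by rewrite (_ : minn _ _ = c) ?canon_dvdE ?bnd //; lia.
have := forallP (forallP adm j) s; have := bnd j (ltn_ord j).
have := bnd s (ltn_ord s) => bs bj vjs.
by rewrite canon_dvdE //; lia.
Qed.

Lemma canon_orbit_le (v w : nat -> nat) :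
  admissible v -> bounded v -> admissible w -> bounded w ->
  canon w \in orbG (canon v) -> forall j, j < k -> v j <= w j.
Proof.
move=> admv bndv admw bndw /orbit_AutP [a Aa wE] j jk.
apply: (@canon_coord_dvdP w (Ordinal jk) (v j) admw bndw (bndv j jk)).1.
rewrite wE; apply/pow_mul_torsionE/Aut_pow_mul_torsion/pow_mul_torsionE => //.
exact: (@canon_coord_dvdP v (Ordinal jk) (v j) admv bndv (bndv j jk)).2.
Qed.

Lemma canon_orbit_inj (v w : nat -> nat) :
  admissible v -> bounded v -> admissible w -> bounded w ->
  canon w \in orbG (canon v) -> forall j, j < k -> v j = w j.
Proof.
move=> admv bndv admw bndw vw j jk; apply/eqP; rewrite eqn_leq.
rewrite (canon_orbit_le admv bndv admw bndw vw) //=.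
by apply: (canon_orbit_le admw bndw admv bndv) => //; rewrite orbit_in_sym.
Qed.

Lemma Zp_unit_coprime (s : 'I_k) m :
  coprime p m -> ((m%:R : 'Z_(p ^ r s)) \is a GRing.unit)%R.
Proof. by move=> cop; rewrite unitZpE ?modulus_gt1 // coprime_pexpl ?r_gt0. Qed.

Definition rescale (m : 'I_k -> nat) (x : G) : G :=
  [ffun s : 'I_k => (((m s)%:R : 'Z_(p ^ r s))^-1 * x s)%R].

Lemma rescale_orbit (m : 'I_k -> nat) x :
  (forall s : 'I_k, coprime p (m s)) -> rescale m x \in orbG x.
Proof.
move=> m_cop; apply: orbit_Aut_morph => [y z | y z /ffunP yz]; apply/ffunP => s.
  by rewrite !prim_ab_mulE !ffunE mulrDr.
by move: (yz s); rewrite !ffunE; apply: mulrI; rewrite unitrV Zp_unit_coprime.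
Qed.

Lemma Zp_pfactor (s : 'I_k) (z : 'Z_(p ^ r s)) : exists lu : nat * nat,
  [/\ lu.1 <= r s, coprime p lu.2 & z = ((lu.2 * p ^ lu.1)%:R)%R].
Proof.
have [z0 | z_gt0] := posnP (val z).
  exists (r s, 1); split; rewrite ?coprimen1 // mul1n [z]Zp_valE z0 mulr0n.
  by apply/esym/eqP; rewrite Zp_nat_eq0 ?modulus_gt1.
have [u cop_u zE] := pfactor_coprime p_prime z_gt0.
exists (logn p (val z), u); split; rewrite /= -?zE -?Zp_valE //.
rewrite -(leq_exp2l _ _ p_gt1) ltnW // (@leq_ltn_trans (val z)) //.
  by rewrite dvdn_leq ?pfactor_dvdnn.
exact: Zp_val_lt (modulus_gt1 s) z.
Qed.

Lemma to_canon x : exists v, bounded v /\ canon v \in orbG x.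
Proof.
have [lu luP] := fin_all_exists (fun s => Zp_pfactor (x s)).
exists (ord_ext (fun s => (lu s).1)); split.
  by move=> s sk; rewrite -[s]/(val (Ordinal sk)) ord_extE; case: (luP (Ordinal sk)).
suff -> : canon (ord_ext (fun s => (lu s).1)) = rescale (fun s => (lu s).2) x.
  by apply: rescale_orbit => s; case: (luP s).
apply/ffunP => s; rewrite !ffunE !ord_extE; case: (luP s) => _ cop ->.
by rewrite natrM mulKr // Zp_unit_coprime.
Qed.

(* The automorphism adding p^(r j - r s) times coordinate s to coordinate j;
   the factor makes it well defined modulo p^(r s). *)
Definition shear (j : nat) (s : 'I_k) (y : G) : G := [ffun t : 'I_k =>
  if val t == j then (y t + (p ^ (r j - r s) * val (y s))%:R)%R else y t].

Lemma shearM j s y z : shear j s (y * z)%g = (shear j s y * shear j s z)%g.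
Proof.
apply/ffunP => t; rewrite /shear !prim_ab_mulE !ffunE; case: ifP => // /eqP tj.
have -> : val (y s + z s)%R = (val (y s) + val (z s)) %% p ^ r s.
  by rewrite {1}[y s]Zp_valE {1}[z s]Zp_valE -natrD Zp_val_nat ?modulus_gt1.
rewrite muln_modr Zp_nat_modd ?modulus_gt1 //.
  by rewrite mulnDr natrD addrACA.
by rewrite -expnD dvdn_exp2l // tj; lia.
Qed.

Lemma shear_inj (j : nat) (s : 'I_k) : j != s -> injective (shear j s).
Proof.
move=> js y z /ffunP yz; apply/ffunP => t.
have sj : val s != j by rewrite eq_sym.
have := yz s; rewrite !ffunE (negbTE sj) => yzs.
by have := yz t; rewrite !ffunE; case: ifP => // _; rewrite yzs; apply: addIr.
Qed.

Lemma coprime_1_plus_pow m : 0 < m -> coprime p (1 + p ^ m).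
Proof.
move=> m_gt0; rewrite prime_coprime // dvdn_addl ?dvdn_exp //.
by rewrite dvdn1 neq_ltn p_gt1 orbT.
Qed.

Definition upd (v : nat -> nat) j e : nat -> nat := fun t => if t == j then e else v t.

(* One descent step: the shear turns p^(v j) into p^(v j) + p^e =
   (1 + p^(v j - e)) p^e, and rescaling removes the unit factor. *)
Lemma lower_step v j (s : 'I_k) : bounded v -> j < k ->
  v s + (r j - r s) < v j -> canon (upd v j (v s + (r j - r s))) \in orbG (canon v).
Proof.
move=> bnd jk lt_vj.
have js : j != s by apply: contraTneq lt_vj => ->; rewrite subnn addn0 ltnn.
have vs_lt : v s < r s by have := bnd j jk; have := bnd s (ltn_ord s); lia.
set e := v s + (r j - r s) in lt_vj *.
apply: orbit_Aut_trans (orbit_Aut_morph (@shearM j s) (shear_inj js) (canon v)) _.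
pose m (t : 'I_k) := if val t == j then 1 + p ^ (v j - e) else 1.
suff -> : canon (upd v j e) = rescale m (shear j s (canon v)).
  apply: rescale_orbit => t; rewrite /m; case: ifP => _; last exact: coprimen1.
  by rewrite coprime_1_plus_pow // subn_gt0.
apply/ffunP => t; rewrite /shear /m /upd !ffunE; case: eqP => [tj|_].
  have vtE : v t = v j by rewrite tj.
  rewrite vtE Zp_val_nat ?modulus_gt1 // modn_small ?ltn_exp2l ?p_gt1 //.
  rewrite -expnD (addnC (r j - r s)) -/e -natrD.
  have -> : p ^ v j + p ^ e = (1 + p ^ (v j - e)) * p ^ e.
    by rewrite mulnDl mul1n -expnD subnK 1?addnC // ltnW.
  by rewrite natrM mulKr // Zp_unit_coprime // coprime_1_plus_pow // subn_gt0.
by rewrite mulr1n invr1 mul1r.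
Qed.

Lemma lower_nonadmissible v : bounded v -> ~~ admissible v ->
  exists2 w, bounded w /\ \sum_(i < k) w i < \sum_(i < k) v i
           & canon w \in orbG (canon v).
Proof.
move=> bnd /forallPn [j] /forallPn [s]; rewrite -ltnNge => lt_vj.
exists (upd v j (v s + (r j - r s))); last exact: lower_step.
split=> [t tk | ]; rewrite /upd.
  case: eqP => [->|_]; last exact: bnd.
  exact: leq_trans (ltnW lt_vj) (bnd j (ltn_ord j)).
rewrite (bigD1 j) //= [X in _ < X](bigD1 j) //= eqxx.
rewrite (eq_bigr (fun i : 'I_k => v i)) ?ltn_add2r // => i ij.
by rewrite val_eqE (negbTE ij).
Qed.

Lemma to_admissible x : exists v, [/\ admissible v, bounded v & canon v \in orbG x].
Proof.
have [v [bnd vx]] := to_canon x.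
have [n] := ubnP (\sum_(i < k) v i); elim: n v bnd vx => // n IH v bnd vx lt_n.
have [adm | nadm] := boolP (admissible v); first by exists v.
have [w [bw lt_w] vw] := lower_nonadmissible bnd nadm.
exact: IH bw (orbit_Aut_trans vx vw) (leq_trans lt_w lt_n).
Qed.

(* Admissible v are the partial sums of increments d with d_0 <= r_0 and
   d_i <= r_i - r_{i-1}; these increments form the finite type Incr. *)
Definition incr_range (i : nat) : nat := (r i - (if i is i'.+1 then r i' else 0)).+1.
Local Notation Incr := {dffun forall i : 'I_k, 'I_(incr_range i)}.

Definition incr (d : Incr) : nat -> nat := ord_ext (fun o => nat_of_ord (d o)).
Definition psum (d : Incr) (j : nat) : nat := \sum_(i < j.+1) incr d i.

Lemma incr_le d i : i < k -> incr d i <= r i - (if i is i'.+1 then r i' else 0).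
Proof. by move=> ik; rewrite -[i]/(val (Ordinal ik)) /incr ord_extE -ltnS ltn_ord. Qed.

Lemma psum0 d : psum d 0 = incr d 0.
Proof. by rewrite /psum big_ord1. Qed.

Lemma psumS d j : psum d j.+1 = psum d j + incr d j.+1.
Proof. by rewrite /psum big_ord_recr. Qed.

Lemma psum_bounded d : bounded (psum d).
Proof.
elim=> [|s IH] sk; first by rewrite psum0; have := incr_le d sk; rewrite subn0.
rewrite psumS; have := IH (ltnW sk); have := incr_le d sk; have := r_incr sk; lia.
Qed.

Lemma psum_mono d s j : s <= j -> psum d s <= psum d j.
Proof.
elim: j => [|j IH]; first by rewrite leqn0 => /eqP ->.
rewrite leq_eqVlt => /orP [/eqP -> // | sj].
by rewrite psumS (leq_trans (IH sj)) ?leq_addr.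
Qed.

Lemma psum_lipschitz d s j : s <= j -> j < k -> psum d j <= psum d s + (r j - r s).
Proof.
elim: j => [|j IH]; first by rewrite leqn0 => /eqP ->; rewrite subnn addn0.
rewrite leq_eqVlt => /orP [/eqP -> _ | sj jk]; first by rewrite subnn addn0.
rewrite psumS; have := IH sj (ltnW jk); have := incr_le d jk; have := r_incr jk.
have := r_mono (sj : s <= j) (ltnW jk); lia.
Qed.

Lemma psum_admissible d : admissible (psum d).
Proof.
apply/forallP => j; apply/forallP => s; have [sj | js] := leqP s j.
  exact: psum_lipschitz.
exact: leq_trans (psum_mono d (ltnW js)) (leq_addr _ _).
Qed.

Lemma psum_inj d d' : (forall j, j < k -> psum d j = psum d' j) -> d = d'.
Proof.
move=> dd'; have incrE i : i < k -> incr d i = incr d' i.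
  case: i => [|i] ik; first by rewrite -!psum0 dd'.
  by apply/eqP; rewrite -(eqn_add2l (psum d i)) {2}dd' ?(ltnW ik) // -!psumS dd'.
by apply/ffunP => o; apply: val_inj; have := incrE o (ltn_ord o); rewrite /incr !ord_extE.
Qed.

Lemma psum_surj w : admissible w -> bounded w ->
  exists d, forall j, j < k -> psum d j = w j.
Proof.
move=> adm bnd; pose dw i := w i - (if i is i'.+1 then w i' else 0).
have adm_nat j s : j < k -> s < k -> w j <= w s + (r j - r s).
  by move=> jk sk; exact: (forallP (forallP adm (Ordinal jk)) (Ordinal sk)).
exists [ffun o : 'I_k => inord (dw o)].
have incrE i : i < k -> incr [ffun o : 'I_k => inord (dw o)] i = dw i.
  move=> ik; rewrite -[i]/(val (Ordinal ik)) /incr ord_extE ffunE inordK // ltnS.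
  case: i ik => [|i] ik; first by have := bnd 0 ik; rewrite /dw /=; lia.
  by have := adm_nat _ _ ik (ltnW ik); rewrite /dw /=; lia.
elim=> [|j IH] jk; first by rewrite psum0 incrE // /dw subn0.
rewrite psumS IH ?(ltnW jk) // incrE // /dw.
by have := adm_nat _ _ (ltnW jk) jk; have := r_incr jk; lia.
Qed.

(* d |-> orbit of canon (psum d) is a bijection from Incr onto the orbits. *)
Lemma count_orbits : #|orbG @: [set: G]| = \prod_(i < k) incr_range i.
Proof.
pose orb_of d := orbG (canon (psum d)).
have orbitsE : orbG @: [set: G] = orb_of @: [set: Incr].
  apply/setP => X; apply/imsetP/imsetP => [[x _ ->] | [d _ ->]]; last first.
    by exists (canon (psum d)).
  have [w [adm bnd wx]] := to_admissible x; have [d dw] := psum_surj adm bnd.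
  exists d => //; rewrite /orb_of (canon_ext dw).
  by apply/(orbit_in_eqP (subxx _)); rewrite orbit_in_sym.
have orb_of_inj : {in [set: Incr] &, injective orb_of}.
  move=> d d' _ _ dd'; apply: psum_inj.
  apply: (canon_orbit_inj (psum_admissible d) (psum_bounded d)
                          (psum_admissible d') (psum_bounded d')).
  by rewrite -/(orb_of d) dd' orbit_refl.
rewrite orbitsE card_in_imset // cardsT card_dep_ffun foldrE big_map big_enum /=.
by apply: eq_bigr => i _; rewrite card_ord.
Qed.

End PrimaryAbelian.

Theorem proposition2 (p k : nat) (r : nat -> nat)
  (hp : prime p) (hk : 0 < k) (hr0 : 1 <= r 0)
  (hr : forall i, i.+1 < k -> r i < r i.+1) :
  #|orbit [Aut [set: prim_ab p k r]]%act (Aut [set: prim_ab p k r])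
      @: [set: prim_ab p k r]|
  = (r 0 + 1) * \prod_(i < k.-1) (r i.+1 - r i + 1).
Proof.
rewrite (count_orbits hp hr0 hr); case: k hk hr => // k _ _ /=.
rewrite big_ord_recl /incr_range subn0 addn1; congr (_ * _).
by apply: eq_bigr => i _; rewrite addn1.
Qed.
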